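(* Let $p,q$ be integers with $2\le q<p$, and let $\tau:\Sigma_q^\ast\to\{-1,0,\ldots,p-2\}$ be a regular mapping. Let \[ \Gamma(\tau)=\{I=i_1i_2\cdots i_{|I|}\in\Sigma_q^\ast: i_{|I|}\ne0\}\cup\{0\} \] (where $0$ denotes the word of length one consisting of the digit $0$). Then the map $\tau^\ast:\Gamma(\tau)\to\Lambda(\tau)$ is a bijection. Furthermore, if $I,J\in\Gamma(\tau)$ are distinct and $I_{1,k}=J_{1,k}$ for some integer $k\ge0$ (the condition being vacuous for $k=0$), then $|\tau^\ast(I)-\tau^\ast(J)|\ge p^k$.
   Context: Let $\Sigma_q=\{0,1,\ldots,q-1\}$, $\Sigma_q^n$ the words of length $n$, and $\Sigma_q^\ast=\bigcup_{n\ge1}\Sigma_q^n$; $|I|$ is the length of $I$. A map $\tau:\Sigma_q^\ast\to\{-1,0,\ldots,p-2\}$ is a regular mapping if (i) $\tau(0^n)=0$ for all $n\ge1$; (ii) $\tau(i_1\cdots i_n)\in i_n+q\mathbb Z$ for every word $i_1\cdots i_n$; (iii) for every $I\in\Sigma_q^\ast$, $\tau(I0^l)=0$ for all sufficiently large $l$. For $I=i_1\cdots i_n\in\Sigma_q^\ast$ and $k\ge1$, let $I_{1,k}=i_1\cdots i_k$ if $k\le n$ and $I_{1,k}=i_1\cdots i_n0^{k-n}$ if $k>n$. Set $\tau^\ast(I)=\sum_{k=1}^\infty \tau(I_{1,k})p^{k-1}$ (a finite sum by (iii)), and $\Lambda(\tau)=\{\tau^\ast(I): I\in\Sigma_q^\ast\}$.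 *)

From HB Require Import structures.
From mathcomp Require Import all_boot all_order all_algebra.
From Stdlib Require Import ClassicalEpsilon.
Set Implicit Arguments. Unset Strict Implicit. Unset Printing Implicit Defensive.
Import Order.TTheory GRing.Theory Num.Theory.
Local Open Scope ring_scope.

Definition word (q : nat) (I : seq nat) : bool :=
  (0 < size I)%N && all (fun i => (i < q)%N) I.

(* I_{1,k}: first k letters, padded with zeros if k > |I| *)
Definition wprefix (I : seq nat) (k : nat) : seq nat := take k (I ++ nseq k 0%N).

Definition regular (p q : nat) (tau : seq nat -> int) : Prop :=
  (forall I, word q I -> -1 <= tau I /\ tau I <= (p%:Z - 2)) /\
  (forall n, (1 <= n)%N -> tau (nseq n 0%N) = 0) /\
  (forall I, word q I -> (q%:Z %| tau I - (last 0%N I)%:Z)%Z) /\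
  (forall I, word q I -> exists L, forall l, (L <= l)%N -> tau (I ++ nseq l 0%N) = 0).

Definition tau_partial (p : nat) (tau : seq nat -> int) (I : seq nat) (N : nat) : int :=
  \sum_(k < N) tau (wprefix I k.+1) * (p%:Z ^+ k).

(* tau^*(I) = sum_{k>=1} tau(I_{1,k}) p^{k-1}: the eventual value of the
   partial sums (which exists when tau is regular, by (iii)). *)
Definition tau_star (p : nat) (tau : seq nat -> int) (I : seq nat) : int :=
  epsilon (inhabits 0%R)
    (fun v => exists N0, forall N, (N0 <= N)%N -> tau_partial p tau I N = v).

Definition Gamma (q : nat) (I : seq nat) : bool :=
  word q I && ((last 0%N I != 0%N) || (I == [:: 0%N])).

(* The values of tau lie in the p consecutive integers -1, ..., p-2, so tau^*(I) is a
   base-p expansion over a complete digit set and determines every digit tau(I_{1,k}).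
   Since tau(I_{1,k}) = i_k mod q with 0 <= i_k < q, these digits determine all letters of
   I padded with zeros, and a word of Gamma is determined by those letters.  If I and J
   share the prefix of length k, their first k digits agree, so p^k divides
   tau^*(I) - tau^*(J), which is nonzero by injectivity. *)

From HB Require Import structures.
From mathcomp Require Import all_boot all_order all_algebra.
From mathcomp Require Import zify.
From Stdlib Require Import ClassicalEpsilon.
Import Order.TTheory GRing.Theory Num.Theory.
Local Open Scope ring_scope.

Lemma dvdz_norm_le (d x : int) : x != 0 -> (d %| x)%Z -> `|d| <= `|x|.
Proof.
move=> x_neq0 /dvdzP [c def_x]; rewrite def_x normrM ler_peMl //.
by rewrite -gtz0_ge1 normr_gt0; apply: contraNneq x_neq0 => c0; rewrite def_x c0 mul0r.
Qed.

Lemma sum_digits_eq0 (p : int) (c : nat -> int) (N : nat) :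
  (forall k, (k < N)%N -> `|c k| < p) -> \sum_(k < N) c k * p ^+ k = 0 ->
  forall k, (k < N)%N -> c k = 0.
Proof.
elim: N c => [|N IHN] c c_lt // sum0 k ltkN.
have c0_lt := c_lt 0%N isT.
have p_gt0 : 0 < p by apply: le_lt_trans c0_lt.
set S := \sum_(i < N) c i.+1 * p ^+ i.
have {}sum0 : c 0%N + p * S = 0.
  rewrite -sum0 big_ord_recl expr0 mulr1 mulr_sumr; congr (_ + _).
  by apply: eq_bigr => i _; rewrite exprS mulrCA.
have c0_eq0 : c 0%N = 0.
  apply: contraTeq c0_lt => c0_neq0; rewrite -leNgt -[p]gtr0_norm //.
  apply: dvdz_norm_le c0_neq0 _; apply/dvdzP; exists (- S).
  by rewrite mulNr mulrC; apply/eqP; rewrite -addr_eq0 sum0.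
case: k ltkN => [|k] ltkN //.
apply: (IHN (fun i => c i.+1)) => //; first by move=> i lt_iN; apply: c_lt.
by move: sum0; rewrite c0_eq0 add0r => /eqP; rewrite mulf_eq0 gt_eqF // => /eqP.
Qed.

Lemma wprefix_mkseq (I : seq nat) (k : nat) : wprefix I k = mkseq (nth 0%N I) k.
Proof.
have size_wprefix : size (wprefix I k) = k.
  by rewrite size_takel // size_cat size_nseq leq_addl.
apply: (@eq_from_nth _ 0%N) => [|j]; first by rewrite size_mkseq.
rewrite size_wprefix => lt_jk.
rewrite nth_mkseq // nth_take // nth_cat; case: ltnP => // le_I_j.
by rewrite nth_nseq nth_default // if_same.
Qed.

Lemma wprefix_cat (I : seq nat) (n : nat) :
  (size I <= n)%N -> wprefix I n = I ++ nseq (n - size I) 0%N.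
Proof.
move=> le_I_n; rewrite /wprefix take_cat ltnNge le_I_n /= take_nseq //.
by rewrite leq_subLR leq_addl.
Qed.

Lemma last_wprefix (I : seq nat) (k : nat) : last 0%N (wprefix I k.+1) = nth 0%N I k.
Proof. by rewrite -nth_last wprefix_mkseq size_mkseq nth_mkseq. Qed.

Lemma wprefix_eq_nth {I J : seq nat} {k j : nat} :
  wprefix I k = wprefix J k -> (j < k)%N -> nth 0%N I j = nth 0%N J j.
Proof. by rewrite !wprefix_mkseq => /(congr1 (nth 0%N ^~ j)) + ?; rewrite !nth_mkseq. Qed.

Lemma wprefixS_eq {I J : seq nat} {k j : nat} :
  wprefix I k = wprefix J k -> (j < k)%N -> wprefix I j.+1 = wprefix J j.+1.
Proof.
move=> eqIJ lt_jk; rewrite !wprefix_mkseq; apply/eq_in_map => i.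
rewrite mem_iota => /andP [_ lt_ij].
by apply: wprefix_eq_nth eqIJ _; apply: leq_trans lt_jk.
Qed.

Lemma nth_word_lt {q : nat} {I : seq nat} (k : nat) : word q I -> (nth 0%N I k < q)%N.
Proof.
case/andP=> I_gt0 /allP ltI; case: (ltnP k (size I)) => [lt_kI|le_Ik].
  by apply/ltI/mem_nth.
by rewrite nth_default //; apply: leq_ltn_trans (leq0n _) (ltI _ (mem_nth 0%N I_gt0)).
Qed.

Lemma word_wprefix {q : nat} {I : seq nat} (k : nat) : word q I -> word q (wprefix I k.+1).
Proof.
move=> wI; rewrite /word wprefix_mkseq size_mkseq ltn0Sn andTb.
by apply/allP => _ /mapP [j _ ->]; apply: nth_word_lt.
Qed.

Lemma size_le_nth (I J : seq nat) :
  last 0%N I != 0%N -> nth 0%N I =1 nth 0%N J -> (size I <= size J)%N.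
Proof.
rewrite -nth_last => + eqIJ; rewrite eqIJ; apply: contraR; rewrite -ltnNge => lt_JI.
by rewrite nth_default //; lia.
Qed.

Lemma Gamma_nth_inj (q : nat) (I J : seq nat) :
  Gamma q I -> Gamma q J -> nth 0%N I =1 nth 0%N J -> I = J.
Proof.
move=> /andP [_ GI] /andP [_ GJ] eqIJ.
have eqJI : nth 0%N J =1 nth 0%N I by move=> k; rewrite eqIJ.
case: (boolP (last 0%N I != 0%N)) => [lI|lI0];
  case: (boolP (last 0%N J != 0%N)) => [lJ|lJ0].
- apply: (@eq_from_nth _ 0%N) => [|k _]; last exact: eqIJ.
  by apply/eqP; rewrite eqn_leq !size_le_nth.
- rewrite (negbTE lJ0) /= in GJ; move: lI.
  by rewrite -nth_last eqIJ (eqP GJ); case: (size I).-1 => //= n; rewrite nth_nil.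
- rewrite (negbTE lI0) /= in GI; move: lJ.
  by rewrite -nth_last eqJI (eqP GI); case: (size J).-1 => //= n; rewrite nth_nil.
- by rewrite (negbTE lI0) in GI; rewrite (negbTE lJ0) in GJ; rewrite (eqP GI) (eqP GJ).
Qed.

Lemma exists_Gamma_nth {q : nat} {J : seq nat} :
  word q J -> exists2 I, Gamma q I & nth 0%N I =1 nth 0%N J.
Proof.
elim/last_ind: J => [//|J x IHJ].
have [->|x_neq0] := eqVneq x 0%N => wJx; last first.
  by exists (rcons J x) => //; rewrite /Gamma wJx last_rcons x_neq0.
case: J IHJ wJx => [|y J] IHJ wJx.
  by exists [:: 0%N] => //; rewrite /Gamma wJx eqxx orbT.
have wJ : word q (y :: J) by move: wJx; rewrite /word all_rcons => /andP [_ /andP [_ ->]].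
have [I GI eqIJ] := IHJ wJ; exists I => // k.
rewrite eqIJ nth_rcons; case: ltnP => // le_J_k.
by rewrite nth_default // if_same.
Qed.

Section RegularMapping.

Context {p q : nat} {tau : seq nat -> int}.
Hypothesis tau_regular : regular p q tau.

Lemma tau_wprefix_range {I : seq nat} (k : nat) :
  word q I -> -1 <= tau (wprefix I k.+1) <= p%:Z - 2.
Proof. by move=> /(word_wprefix k) /tau_regular.1 [-> ->]. Qed.

Lemma tau_wprefix_mod {I : seq nat} (k : nat) :
  word q I -> (tau (wprefix I k.+1) = (nth 0%N I k)%:Z %[mod q])%Z.
Proof.
move=> /(word_wprefix k) /tau_regular.2.2.1; rewrite last_wprefix.
by rewrite -eqz_mod_dvd => /eqP.
Qed.

Lemma tau_wprefix_eq0 {I : seq nat} : word q I ->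
  exists N0, forall N, (N0 <= N)%N -> tau (wprefix I N.+1) = 0.
Proof.
move=> /tau_regular.2.2.2 [L stabI]; exists (size I + L)%N => N le_N0_N.
by rewrite wprefix_cat ?stabI //; lia.
Qed.

Lemma tau_star_partial {I : seq nat} : word q I ->
  exists N0, forall N, (N0 <= N)%N -> tau_star p tau I = tau_partial p tau I N.
Proof.
move=> /tau_wprefix_eq0 [N0 tauI0].
have partial_const N : (N0 <= N)%N -> tau_partial p tau I N = tau_partial p tau I N0.
  elim: N => [|N IHN]; first by rewrite leqn0 => /eqP ->.
  rewrite leq_eqVlt => /orP [/eqP <- //|le_N0_N].
  by rewrite {1}/tau_partial big_ord_recr /= tauI0 // mul0r addr0; apply: IHN.
have [|N1 partialN1] := @epsilon_spec int (inhabits 0)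
    (fun v => exists N0, forall N, (N0 <= N)%N -> tau_partial p tau I N = v).
  by exists (tau_partial p tau I N0), N0; apply: partial_const.
by exists N1 => N le_N1_N; rewrite /tau_star partialN1.
Qed.

Lemma tau_star_subE {I J : seq nat} : word q I -> word q J ->
  exists N0, forall N, (N0 <= N)%N -> tau_star p tau I - tau_star p tau J =
    \sum_(k < N) (tau (wprefix I k.+1) - tau (wprefix J k.+1)) * p%:Z ^+ k.
Proof.
move=> /tau_star_partial [NI tauI] /tau_star_partial [NJ tauJ].
exists (maxn NI NJ) => N; rewrite geq_max => /andP [le_NI le_NJ].
rewrite (tauI N) // (tauJ N) // -sumrB.
by apply: eq_bigr => k _; rewrite mulrBl.
Qed.

Lemma nth_eq_tau_wprefix (I J : seq nat) (k : nat) : word q I -> word q J ->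
  tau (wprefix I k.+1) = tau (wprefix J k.+1) -> nth 0%N I k = nth 0%N J k.
Proof.
move=> wI wJ eq_tau; have := tau_wprefix_mod k wJ.
rewrite -eq_tau (tau_wprefix_mod k wI) !modz_nat => /eqP; rewrite eqz_nat => /eqP.
by rewrite !modn_small ?nth_word_lt.
Qed.

Lemma tau_star_nth_eq {I J : seq nat} : word q I -> word q J ->
  nth 0%N I =1 nth 0%N J -> tau_star p tau I = tau_star p tau J.
Proof.
move=> wI wJ eqIJ; have [N0 subE] := tau_star_subE wI wJ.
apply/subr0_eq; rewrite (subE N0) //; apply: big1 => k _.
by rewrite !wprefix_mkseq (eq_mkseq eqIJ) subrr mul0r.
Qed.

Lemma dvdz_tau_star_sub {I J : seq nat} {k : nat} : word q I -> word q J ->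
  wprefix I k = wprefix J k -> (p%:Z ^+ k %| tau_star p tau I - tau_star p tau J)%Z.
Proof.
move=> wI wJ eqIJk; have [N0 subE] := tau_star_subE wI wJ.
rewrite (subE N0) //; apply: rpred_sum => j _.
have [lt_jk|le_kj] := ltnP j k.
  by rewrite (wprefixS_eq eqIJk lt_jk) subrr mul0r dvdz0.
exact/dvdz_mull/dvdz_exp2l.
Qed.

Hypothesis p_gt0 : (0 < p)%N.

Lemma tau_star_eq_tau_wprefix (I J : seq nat) : word q I -> word q J ->
  tau_star p tau I = tau_star p tau J ->
  forall k, tau (wprefix I k.+1) = tau (wprefix J k.+1).
Proof.
move=> wI wJ eq_star k; have [N0 subE] := tau_star_subE wI wJ.
apply/subr0_eq; set c := fun j => tau (wprefix I j.+1) - tau (wprefix J j.+1).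
apply: (@sum_digits_eq0 p%:Z c (maxn N0 k.+1)); last by rewrite leq_max ltnSn orbT.
  move=> j _; have /andP [gtI ltI] := tau_wprefix_range j wI.
  by have /andP [gtJ ltJ] := tau_wprefix_range j wJ; rewrite ltr_norml /c; lia.
by rewrite -subE ?leq_maxl // eq_star subrr.
Qed.

Lemma tau_star_Gamma_inj {I J : seq nat} : Gamma q I -> Gamma q J ->
  tau_star p tau I = tau_star p tau J -> I = J.
Proof.
move=> GI GJ eq_star; have wI := (andP GI).1; have wJ := (andP GJ).1.
apply: Gamma_nth_inj GI GJ _ => k.
exact/nth_eq_tau_wprefix/tau_star_eq_tau_wprefix.
Qed.

End RegularMapping.

Theorem lemma2p2 (p q : nat) (tau : seq nat -> int) :
  (2 <= q)%N -> (q < p)%N -> regular p q tau ->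
  (forall I J, Gamma q I -> Gamma q J -> tau_star p tau I = tau_star p tau J -> I = J) /\
  (forall J, word q J -> exists I, Gamma q I /\ tau_star p tau I = tau_star p tau J) /\
  (forall I J (k : nat), Gamma q I -> Gamma q J -> I <> J ->
     wprefix I k = wprefix J k ->
     p%:Z ^+ k <= `|tau_star p tau I - tau_star p tau J|).
Proof.
move=> _ lt_qp tau_reg; have p_gt0 : (0 < p)%N by lia.
have tau_inj := tau_star_Gamma_inj tau_reg p_gt0.
split; first exact: tau_inj.
split.
  move=> J wJ; have [I GI eqIJ] := exists_Gamma_nth wJ.
  by exists I; split => //; apply: (tau_star_nth_eq tau_reg _ wJ eqIJ); case/andP: GI.
move=> I J k /[dup] GI /andP [wI _] /[dup] GJ /andP [wJ _] neqIJ eqIJk.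
rewrite -[p%:Z ^+ k]ger0_norm ?exprn_ge0 //.
apply: dvdz_norm_le; last exact (dvdz_tau_star_sub tau_reg wI wJ eqIJk).
by rewrite subr_eq0; apply: contra_not_neq neqIJ; apply: tau_inj.
Qed.
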